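(* Let $m\ge2$ and, for $1\le k\le m$, let $\tilde\tau_k=t_{k+m-1}t_{k+m-2}\cdots t_{k+1}t_kt_{k+1}\cdots t_{k+m-2}t_{k+m-1}\in\tilde{\mathcal S}_{2m}$ and $\tilde\tau=\tilde\tau_1\tilde\tau_2\cdots\tilde\tau_m$. Then for all $1\le i\le m-1$ we have $\tilde\tau^{-1}t_i\tilde\tau=z^mt_{i+m}$ and $\tilde\tau^{-1}t_{i+m}\tilde\tau=z^mt_i$.
   Context: $\tilde{\mathcal S}_{2m}$ is the group with presentation $\langle z,t_1,\dots,t_{2m-1}\mid z^2=1,\ t_i^2=z\ (1\le i\le 2m-1),\ (t_it_{i+1})^3=z\ (1\le i\le 2m-2),\ t_it_j=zt_jt_i\ (|i-j|>1)\rangle$. (The element $\tilde\tau$ is a lift of the permutation $(1,m+1)(2,m+2)\cdots(m,2m)$ under $t_i\mapsto(i,i+1)$.) *)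

From mathcomp Require Import all_boot.
Set Implicit Arguments. Unset Strict Implicit. Unset Printing Implicit Defensive.

Definition is_group (G : Type) (mul : G -> G -> G) (one : G) (inv : G -> G) : Prop :=
  [/\ (forall x y w, mul x (mul y w) = mul (mul x y) w),
      (forall x, mul one x = x), (forall x, mul x one = x),
      (forall x, mul (inv x) x = one) & (forall x, mul x (inv x) = one)].

Definition gpow (G : Type) (mul : G -> G -> G) (one : G) (n : nat) (x : G) : G :=
  iter n (mul x) one.

Definition gprod (G : Type) (mul : G -> G -> G) (one : G) (s : seq G) : G :=
  foldr mul one s.

Definition stilde_rels (G : Type) (mul : G -> G -> G) (one : G)
    (m : nat) (z : G) (t : nat -> G) : Prop :=
  [/\ mul z z = one,
      (forall i, 1 <= i <= 2 * m - 1 -> mul (t i) (t i) = z),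
      (forall i, 1 <= i <= 2 * m - 2 ->
          gpow mul one 3 (mul (t i) (t i.+1)) = z)
    & (forall i j, 1 <= i <= 2 * m - 1 -> 1 <= j <= 2 * m - 1 ->
          (i.+1 < j) || (j.+1 < i) -> mul (t i) (t j) = mul z (mul (t j) (t i)))].

Definition tau_k (G : Type) (mul : G -> G -> G) (one : G) (m : nat) (t : nat -> G)
    (k : nat) : G :=
  gprod mul one (map t (rev (iota k.+1 m.-1) ++ k :: iota k.+1 m.-1)).

Definition tau (G : Type) (mul : G -> G -> G) (one : G) (m : nat) (t : nat -> G) : G :=
  gprod mul one (map (tau_k mul one m t) (iota 1 m)).

From mathcomp Require Import all_boot zify.
Set Implicit Arguments. Unset Strict Implicit. Unset Printing Implicit Defensive.

(* In the symmetric group, tau_k is the transposition (k, k+m) and tau swaps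
   the blocks {1..m} and {m+1..2m}.  In the double cover every computation is
   a conjugation of a generator t_j, carried out letter by letter: conjugating
   by a letter far from j only contributes the central sign z, while the
   braid relation moves t_j to a neighbouring generator.  Conjugating t_i by
   tau_1 ... tau_{i-1} and t_{i+m} by tau_{i+2} ... tau_m only contributes
   signs, and the pair tau_i tau_{i+1} exchanges t_i and t_{i+m}; the signs
   add up to z^(m-2) = z^m. *)

Definition far i j := (i.+1 < j) || (j.+1 < i).

Lemma iota_succ_r a n : iota a n.+1 = iota a n ++ [:: a + n].
Proof. by rewrite -addn1 iotaD. Qed.

Section Conjugation.

Variables (G : Type) (mul : G -> G -> G) (one : G) (inv : G -> G).
Local Notation "x ** y" := (mul x y) (at level 40, left associativity).
Hypothesis mulgA : forall x y w, x ** (y ** w) = x ** y ** w.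
Hypothesis mul1g : forall x, one ** x = x.
Hypothesis mulg1 : forall x, x ** one = x.
Hypothesis mulVg : forall x, inv x ** x = one.
Hypothesis mulgV : forall x, x ** inv x = one.

Definition gconj x g := inv g ** x ** g.

Lemma gconj_eq x g y : gconj x g = y <-> x ** g = g ** y.
Proof.
rewrite /gconj; split => [<-|h]; first by rewrite !mulgA mulgV mul1g.
by rewrite -mulgA h mulgA mulVg mul1g.
Qed.

Lemma gconjE x g : x ** g = g ** gconj x g.
Proof. exact/gconj_eq. Qed.

Lemma gconjM x g h : gconj x (g ** h) = gconj (gconj x g) h.
Proof.
by apply/gconj_eq; rewrite mulgA (gconjE x g) -mulgA (gconjE (gconj x g) h) mulgA.
Qed.

Lemma gconjg1 x : gconj x one = x.
Proof. by apply/gconj_eq; rewrite mulg1 mul1g. Qed.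

Lemma gconjgg x : gconj x x = x.
Proof. exact/gconj_eq. Qed.

Lemma mulIg x y w : y ** x = w ** x -> y = w.
Proof. by move=> h; rewrite -(mulg1 y) -(mulgV x) mulgA h -mulgA mulgV mulg1. Qed.

(* (aba)(bab) = (ab)^3 = z = (bab)(bab), the last because a z a = z z = 1. *)
Lemma braid_of_cube z a b : z ** z = one -> a ** a = z -> b ** b = z ->
  gpow mul one 3 (a ** b) = z -> a ** b ** a = b ** a ** b.
Proof.
move=> zz aa bb ab3; apply: (@mulIg (b ** a ** b)).
have za : z ** a = a ** z by rewrite -aa mulgA.
have aza : a ** z ** a = one by rewrite -mulgA za mulgA aa zz.
transitivity z; first by rewrite -ab3 /gpow /= mulg1 !mulgA.
rewrite -!mulgA [b ** (b ** _)]mulgA bb [a ** (z ** _)]mulgA [a ** z ** _]mulgA.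
by rewrite aza mul1g bb.
Qed.

Section Relations.

Variables (z : G) (t : nat -> G) (N : nat).

Definition is_gen j := 0 < j <= N.

Hypothesis sqr_z : z ** z = one.
Hypothesis sqr_t : forall i, is_gen i -> t i ** t i = z.
Hypothesis braid_t : forall i, is_gen i -> is_gen i.+1 ->
  t i ** t i.+1 ** t i = t i.+1 ** t i ** t i.+1.
Hypothesis far_t : forall i j, is_gen i -> is_gen j -> far i j ->
  t i ** t j = z ** (t j ** t i).

Definition word s := gprod mul one (map t s).

Definition zpow e := if odd e then z else one.

Lemma word_cons x s : word (x :: s) = t x ** word s.
Proof. by []. Qed.

Lemma word1 x : word [:: x] = t x.
Proof. exact: mulg1. Qed.

Lemma word_cat s1 s2 : word (s1 ++ s2) = word s1 ** word s2.
Proof.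
elim: s1 => [|x s IH] /=; first by rewrite mul1g.
by rewrite !word_cons IH mulgA.
Qed.

Lemma zpowD a b : zpow a ** zpow b = zpow (a + b).
Proof. by rewrite /zpow oddD; case: (odd a); case: (odd b); rewrite ?mulg1 ?mul1g. Qed.

Lemma zpow_mod2 a b : a = b %[mod 2] -> zpow a = zpow b.
Proof. by rewrite /zpow !modn2; case: (odd a); case: (odd b). Qed.

Lemma zpowK e x : zpow e ** (zpow e ** x) = x.
Proof. by rewrite mulgA zpowD /zpow oddD addbb mul1g. Qed.

Lemma gpow_zpow n : gpow mul one n z = zpow n.
Proof.
elim: n => [|n IH] //; rewrite /gpow /= -/(gpow mul one n z) IH.
by rewrite -[z]/(zpow 1) zpowD.
Qed.

Lemma commute_z_t j : is_gen j -> z ** t j = t j ** z.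
Proof. by move=> gj; rewrite -(sqr_t gj) mulgA. Qed.

Lemma commute_zpow_word e s : all is_gen s -> zpow e ** word s = word s ** zpow e.
Proof.
rewrite /zpow; case: (odd e) => [|_]; last by rewrite mulg1 mul1g.
elim: s => [|x s IH] /=; first by rewrite mulg1 mul1g.
case/andP=> gx gs; by rewrite mulgA commute_z_t // -mulgA IH // mulgA.
Qed.

Lemma commute_zpow_t e j : is_gen j -> zpow e ** t j = t j ** zpow e.
Proof. by move=> gj; rewrite -word1 commute_zpow_word //= gj. Qed.

Lemma gconj_zpowl e x s : all is_gen s ->
  gconj (zpow e ** x) (word s) = zpow e ** gconj x (word s).
Proof.
by move=> gs; apply/gconj_eq; rewrite -mulgA (gconjE x) mulgA commute_zpow_word // -mulgA.
Qed.

Lemma gconj_zl x s : all is_gen s -> gconj (z ** x) (word s) = z ** gconj x (word s).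
Proof. exact: (gconj_zpowl 1). Qed.

Lemma gconj_zpowr e j g : is_gen j -> gconj (t j) (zpow e ** g) = gconj (t j) g.
Proof.
by move=> gj; apply/gconj_eq; rewrite mulgA -commute_zpow_t // -mulgA (gconjE _ g) mulgA.
Qed.

Lemma mul_t_word_far x s : is_gen x -> all is_gen s -> all (far x) s ->
  t x ** word s = zpow (size s) ** (word s ** t x).
Proof.
move=> gx; elim: s => [|y s IH] /=; first by rewrite mulg1 mul1g.
case/andP=> gy gs /andP[fy fs].
rewrite word_cons mulgA far_t // -!mulgA IH // mulgA commute_z_t // -mulgA.
rewrite [z ** (zpow _ ** _)]mulgA -[z]/(zpow 1) zpowD add1n.
by rewrite [RHS]mulgA commute_zpow_t // -mulgA.
Qed.

Lemma word_far_move s1 x s s2 :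
  all is_gen s1 -> is_gen x -> all is_gen s -> all (far x) s ->
  word (s1 ++ x :: s ++ s2) = zpow (size s) ** word (s1 ++ s ++ x :: s2).
Proof.
move=> g1 gx gs fs; rewrite !word_cat word_cons word_cat [t x ** _]mulgA mul_t_word_far //.
by rewrite word_cons !mulgA commute_zpow_word.
Qed.

Lemma word_far_moveL s1 x s s2 :
  all is_gen s1 -> is_gen x -> all is_gen s -> all (far x) s ->
  word (s1 ++ s ++ x :: s2) = zpow (size s) ** word (s1 ++ x :: s ++ s2).
Proof. by move=> *; rewrite word_far_move // zpowK. Qed.

Lemma word_braid s1 a s2 : is_gen a -> is_gen a.+1 ->
  word (s1 ++ [:: a; a.+1; a] ++ s2) = word (s1 ++ [:: a.+1; a; a.+1] ++ s2).
Proof.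
move=> *; have braid_word : word [:: a; a.+1; a] = word [:: a.+1; a; a.+1].
  by rewrite /word /= !mulg1 !mulgA braid_t.
by rewrite !word_cat braid_word.
Qed.

Lemma gconj_far_word j s : is_gen j -> all is_gen s -> all (far j) s ->
  gconj (t j) (word s) = zpow (size s) ** t j.
Proof.
by move=> *; apply/gconj_eq; rewrite mul_t_word_far // mulgA commute_zpow_word // -mulgA.
Qed.

Lemma gconj_far j l : is_gen j -> is_gen l -> far j l -> gconj (t j) (t l) = z ** t j.
Proof. by move=> gj gl fl; rewrite -(word1 l) gconj_far_word // /= ?gl ?fl. Qed.

Lemma gconj_braid_up a : is_gen a -> is_gen a.+1 -> gconj (t a) (t a.+1 ** t a) = t a.+1.
Proof. by move=> *; apply/gconj_eq; rewrite !mulgA braid_t. Qed.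

Lemma gconj_braid_down a : is_gen a -> is_gen a.+1 ->
  gconj (t a.+1) (t a ** t a.+1) = t a.
Proof. by move=> *; apply/gconj_eq; rewrite !mulgA braid_t. Qed.

Lemma all_gen_iota a n : 0 < a -> a + n <= N.+1 -> all is_gen (iota a n).
Proof. by move=> *; apply/allP => l; rewrite mem_iota /is_gen; lia. Qed.

Lemma all_far_iota j a n : j.+1 < a \/ a + n < j -> all (far j) (iota a n).
Proof. by move=> *; apply/allP => l; rewrite mem_iota /far; lia. Qed.

Definition hook a n := rev (iota a.+1 n) ++ a :: iota a.+1 n.

Lemma hookS a n : hook a n.+1 = (a + n).+1 :: hook a n ++ [:: (a + n).+1].
Proof. by rewrite /hook iota_succ_r rev_cat /= -catA addSn. Qed.

Lemma hookSS a n :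
  hook a n.+2 = [:: (a + n).+2; (a + n).+1] ++ hook a n ++ [:: (a + n).+1; (a + n).+2].
Proof. by rewrite !hookS /= -catA addnS. Qed.

Lemma hook_desc_asc a n : hook a n = rev (iota a n.+1) ++ iota a.+1 n.
Proof. by rewrite /hook /= rev_cons -cats1 -catA. Qed.

Lemma hook_center a n :
  hook a n.+1 = rev (iota a.+2 n) ++ [:: a.+1; a; a.+1] ++ iota a.+2 n.
Proof. by rewrite /hook /= rev_cons -cats1 -catA. Qed.

Lemma mem_hook a n l : l \in hook a n -> a <= l <= a + n.
Proof. by rewrite /hook mem_cat mem_rev inE !mem_iota; lia. Qed.

Lemma size_hook a n : size (hook a n) = n + n + 1.
Proof. by rewrite /hook size_cat /= size_rev size_iota; lia. Qed.

Lemma all_gen_hook a n : 0 < a -> a + n <= N -> all is_gen (hook a n).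
Proof. by move=> *; apply/allP => l /mem_hook; rewrite /is_gen; lia. Qed.

Lemma all_far_hook j a n : j.+1 < a \/ (a + n).+1 < j -> all (far j) (hook a n).
Proof. by move=> *; apply/allP => l /mem_hook; rewrite /far; lia. Qed.

Lemma gconj_hook_far j a n : is_gen j -> 0 < a -> a + n <= N ->
  j.+1 < a \/ (a + n).+1 < j -> gconj (t j) (word (hook a n)) = z ** t j.
Proof.
move=> *; rewrite gconj_far_word ?all_gen_hook ?all_far_hook // size_hook.
by rewrite (@zpow_mod2 _ 1) //; lia.
Qed.

Lemma gconj_hook_inner j a n : 0 < a -> a + n <= N -> a < j < a + n ->
  gconj (t j) (word (hook a n)) = z ** t j.
Proof.
elim: n => [|n IH] a_gt0 an_le /andP[aj jan]; first by lia.
have gj : is_gen j by rewrite /is_gen; lia.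
have gtop : is_gen (a + n).+1 by rewrite /is_gen; lia.
have [j_in | j_top] := ltnP j (a + n).
  rewrite hookS word_cons gconjM gconj_far //; last by rewrite /far; lia.
  rewrite word_cat gconjM gconj_zl ?all_gen_hook ?IH ?aj //; try lia.
  by rewrite mulgA sqr_z mul1g word1 gconj_far // /far; lia.
case: n IH an_le jan j_top {gtop} => [|n] _ an_le jan j_top; first by lia.
have -> : j = (a + n).+1 by lia.
have gtop : is_gen (a + n).+1 by rewrite /is_gen; lia.
have gtop2 : is_gen (a + n).+2 by rewrite /is_gen; lia.
rewrite hookSS word_cat gconjM word_cons word1 gconj_braid_up //.
rewrite word_cat gconjM gconj_far_word ?all_gen_hook ?all_far_hook //; try lia.
rewrite gconj_zpowl; last by rewrite /= gtop gtop2.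
rewrite word_cons word1 gconj_braid_down //.
by rewrite size_hook (@zpow_mod2 _ 1) //; lia.
Qed.

(* The sign is left unspecified: conjugating a generator ignores it (gconj_zpowr). *)
Lemma word_run_hook_braid a k : 0 < a -> a + k.+2 <= N -> exists e,
  word (iota a.+1 k.+1 ++ hook a k.+2) =
  zpow e ** word ((a + k).+2 :: (iota a.+1 k ++ hook a k.+1) ++ [:: (a + k).+2; (a + k).+1]).
Proof.
move=> a_gt0 ak_le; set b := (a + k).+1.
have gb : is_gen b by rewrite /is_gen; lia.
have gb1 : is_gen b.+1 by rewrite /is_gen; lia.
have grun : all is_gen (iota a.+1 k) by apply: all_gen_iota; lia.
have ghook : all is_gen (hook a k) by apply: all_gen_hook; lia.
have frun : all (far b.+1) (iota a.+1 k) by apply: all_far_iota; lia.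
have fhook : all (far b.+1) (hook a k) by apply: all_far_hook; lia.
exists (k + size (hook a k)).
have -> : iota a.+1 k.+1 ++ hook a k.+2 =
    iota a.+1 k ++ [:: b; b.+1; b] ++ hook a k ++ [:: b; b.+1].
  by rewrite iota_succ_r hookSS -!catA addSn.
rewrite word_braid // -[iota a.+1 k ++ _]cat0s catA.
rewrite -catA [[:: b.+1; b; b.+1] ++ _]/= word_far_moveL // cat0s.
have -> : b.+1 :: iota a.+1 k ++ [:: b, b.+1 & hook a k ++ [:: b; b.+1]] =
    (b.+1 :: iota a.+1 k ++ [:: b]) ++ b.+1 :: hook a k ++ [:: b; b.+1].
  by rewrite /= -!catA.
rewrite word_far_move //; last by rewrite /= all_cat grun /= gb gb1.
have -> : (b.+1 :: iota a.+1 k ++ [:: b]) ++ hook a k ++ [:: b.+1; b; b.+1] =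
    ((b.+1 :: iota a.+1 k ++ [:: b]) ++ hook a k) ++ [:: b.+1; b; b.+1] ++ [::].
  by rewrite cats0 -!catA.
rewrite -word_braid //.
have -> : ((b.+1 :: iota a.+1 k ++ [:: b]) ++ hook a k) ++ [:: b; b.+1; b] ++ [::] =
    b.+1 :: (iota a.+1 k ++ hook a k.+1) ++ [:: b.+1; b].
  by rewrite cats0 hookS -/b /hook /= -!catA /= -!catA cat_cons -catA.
by rewrite size_iota mulgA zpowD.
Qed.

Lemma gconj_run_hook a k : 0 < a -> a + k.+1 <= N ->
  gconj (t a) (word (iota a.+1 k ++ hook a k.+1)) = zpow k ** t (a + k).+1.
Proof.
elim: k => [|k IH] a_gt0 ak_le.
  have ga : is_gen a by rewrite /is_gen; lia.
  have ga1 : is_gen a.+1 by rewrite /is_gen; lia.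
  rewrite addn0 (_ : iota a.+1 0 ++ hook a 1 = [:: a.+1; a] ++ [:: a.+1]) //.
  by rewrite word_cat gconjM word_cons word1 gconj_braid_up // word1 gconjgg mul1g.
have [e ->] := word_run_hook_braid a_gt0 ak_le.
set b := (a + k).+1.
have gb : is_gen b by rewrite /is_gen; lia.
have gb1 : is_gen b.+1 by rewrite /is_gen; lia.
have ga : is_gen a by rewrite /is_gen; lia.
rewrite gconj_zpowr // word_cons gconjM gconj_far //; last by rewrite /far /b; lia.
rewrite word_cat gconjM gconj_zl; last first.
  by rewrite all_cat all_gen_iota ?all_gen_hook //; lia.
rewrite IH //; last by lia.
rewrite mulgA -[z]/(zpow 1) zpowD gconj_zpowl; last by rewrite /= gb gb1.
by rewrite word_cons word1 gconj_braid_up // add1n addnS.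
Qed.

Lemma gconj_hook_pair_low i n : 0 < i -> 0 < n -> i + n < N ->
  gconj (t i) (word (hook i n ++ hook i.+1 n)) = t (i + n).+1.
Proof.
case: n => [|n] // i_gt0 _ in_lt.
have gi : is_gen i by rewrite /is_gen; lia.
have gi1 : is_gen i.+1 by rewrite /is_gen; lia.
rewrite hook_center -!catA word_cat gconjM gconj_far_word //; first last.
- by rewrite all_rev; apply: all_far_iota; lia.
- by rewrite all_rev; apply: all_gen_iota; lia.
rewrite -[[:: i.+1; i; i.+1] ++ _]/([:: i.+1; i] ++ i.+1 :: _).
rewrite word_cat gconjM gconj_zpowl; last by rewrite /= gi gi1.
rewrite word_cons word1 gconj_braid_up // gconj_zpowl; last first.
  by rewrite /= gi1 all_cat all_gen_iota ?all_gen_hook //; lia.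
rewrite word_cons gconjM gconjgg.
by rewrite gconj_run_hook ?size_rev ?size_iota ?zpowK ?addSn ?addnS //; lia.
Qed.

Lemma gconj_desc_run_pair i n : 0 < i -> i + n < N ->
  gconj (t (i + n).+1) (word (rev (iota i n.+1) ++ rev (iota i.+1 n.+1))) = t i.
Proof.
elim: n => [|n IH] i_gt0 in_lt.
  have gi : is_gen i by rewrite /is_gen; lia.
  have gi1 : is_gen i.+1 by rewrite /is_gen; lia.
  rewrite addn0 (_ : rev (iota i 1) ++ rev (iota i.+1 1) = [:: i; i.+1]) //.
  by rewrite word_cons word1 gconj_braid_down.
set c := (i + n).+1.
have gc : is_gen c by rewrite /is_gen; lia.
have gc1 : is_gen c.+1 by rewrite /is_gen; lia.
have -> : rev (iota i n.+2) ++ rev (iota i.+1 n.+2) =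
    [:: c] ++ rev (iota i n.+1) ++ c.+1 :: rev (iota i.+1 n.+1).
  by rewrite (iota_succ_r i n.+1) (iota_succ_r i.+1 n.+1) !rev_cat /= addSn addnS.
have gdesc : all is_gen (rev (iota i n.+1)) by rewrite all_rev; apply: all_gen_iota; lia.
have fdesc : all (far c.+1) (rev (iota i n.+1)).
  by rewrite all_rev; apply: all_far_iota; rewrite /c; lia.
rewrite word_far_moveL //; last by rewrite /= gc.
rewrite addnS gconj_zpowr // -[[:: c] ++ _]/([:: c; c.+1] ++ _).
rewrite word_cat gconjM word_cons word1 gconj_braid_down //.
by rewrite IH //; lia.
Qed.

(* t_(l+1) commutes past t_(i+n) ... t_(l+2), braids with t_(l+1) t_l into
   t_l t_(l+1) t_l, and t_l then commutes past t_(l-1) ... t_i. *)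
Lemma word_desc_run_shift i n l s : 0 < i -> i + n <= N -> i <= l < i + n ->
  word (rev (iota i n.+1) ++ l.+1 :: s) =
  zpow n.-1 ** word (l :: rev (iota i n.+1) ++ s).
Proof.
move=> i_gt0 in_le /andP[il lin].
set q := l - i; set p := i + n - l.+1.
have -> : iota i n.+1 = iota i q ++ [:: l; l.+1] ++ iota l.+2 p.
  have -> : n.+1 = q + (2 + p) by rewrite /q /p; lia.
  by rewrite !iotaD (_ : i + q = l) ?addn2 // /q; lia.
have gl : is_gen l by rewrite /is_gen; lia.
have gl1 : is_gen l.+1 by rewrite /is_gen; lia.
have gtop : all is_gen (rev (iota l.+2 p)) by rewrite all_rev; apply: all_gen_iota; lia.
have gbot : all is_gen (rev (iota i q)) by rewrite all_rev; apply: all_gen_iota; lia.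
have ftop : all (far l) (rev (iota l.+2 p)) by rewrite all_rev; apply: all_far_iota; lia.
have fbot : all (far l.+1) (rev (iota i q)) by rewrite all_rev; apply: all_far_iota; lia.
rewrite !rev_cat -!catA -[_ ++ rev (iota i q) ++ _]/([:: l.+1; l] ++ _) catA.
rewrite word_far_moveL ?all_cat ?gtop /= ?gl ?gl1 //.
rewrite -catA -[[:: l.+1; l] ++ _]/([:: l.+1; l; l.+1] ++ _) -word_braid //.
rewrite -[rev (iota l.+2 p) ++ _]cat0s -[[:: l; l.+1; l] ++ _]/(l :: [:: l.+1; l] ++ _).
rewrite word_far_moveL // !size_rev !size_iota mulgA zpowD /=.
by rewrite (@zpow_mod2 _ n.-1) // /p /q; lia.
Qed.

Lemma gconj_desc_run_cons i n l s : 0 < i -> i + n < N -> i <= l < i + n -> all is_gen s ->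
  gconj (t (i + n).+1) (word (rev (iota i n.+1) ++ l.+1 :: s)) =
  z ** gconj (t (i + n).+1) (word (rev (iota i n.+1) ++ s)).
Proof.
move=> i_gt0 in_lt l_in gs.
have gtop : is_gen (i + n).+1 by rewrite /is_gen; lia.
have gl : is_gen l by rewrite /is_gen; lia.
rewrite word_desc_run_shift //; last by lia.
rewrite gconj_zpowr // word_cons gconjM gconj_far //; last by rewrite /far; lia.
by rewrite gconj_zl // all_cat gs all_rev all_gen_iota //; lia.
Qed.

Lemma gconj_desc_asc_run i n k s : 0 < i -> i + n < N -> k <= n -> all is_gen s ->
  gconj (t (i + n).+1) (word (rev (iota i n.+1) ++ iota i.+1 k ++ s)) =
  zpow k ** gconj (t (i + n).+1) (word (rev (iota i n.+1) ++ s)).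
Proof.
move=> i_gt0 in_lt; elim: k s => [|k IH] s k_le gs; first by rewrite mul1g.
rewrite (iota_succ_r i.+1 k) -catA IH; first last.
- by rewrite /= gs andbT /is_gen; lia.
- by lia.
rewrite (_ : i.+1 + k = (i + k).+1) // gconj_desc_run_cons //; last by lia.
by rewrite mulgA -[z]/(zpow 1) zpowD addn1.
Qed.

Lemma gconj_hook_pair_high i n : 0 < i -> i + n < N ->
  gconj (t (i + n).+1) (word (hook i n ++ hook i.+1 n)) = t i.
Proof.
move=> i_gt0 in_lt.
have gi : is_gen i by rewrite /is_gen; lia.
have grun : all is_gen (iota i.+2 n) by apply: all_gen_iota; lia.
have gdesc : all is_gen (rev (iota i.+1 n.+1)) by rewrite all_rev; apply: all_gen_iota; lia.
rewrite !hook_desc_asc -!catA gconj_desc_asc_run //; last by rewrite all_cat gdesc grun.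
rewrite catA word_cat gconjM gconj_desc_run_pair // gconj_far_word //; last first.
  by apply: all_far_iota; lia.
by rewrite size_iota zpowK.
Qed.

(* [tau mul one m t] is convertible to [hook_prod m.-1 (iota 1 m)]. *)
Definition hook_prod n s := gprod mul one (map (fun k => word (hook k n)) s).

Lemma hook_prod_cat n s1 s2 : hook_prod n (s1 ++ s2) = hook_prod n s1 ** hook_prod n s2.
Proof.
elim: s1 => [|k s IH] /=; first by rewrite mul1g.
by rewrite -mulgA -IH.
Qed.

Lemma hook_prod_split n m i : 0 < i < m ->
  hook_prod n (iota 1 m) = hook_prod n (iota 1 i.-1) **
    word (hook i n ++ hook i.+1 n) ** hook_prod n (iota i.+2 (m - i.+1)).
Proof.
move=> i_in.
have -> : iota 1 m = iota 1 i.-1 ++ iota i 2 ++ iota i.+2 (m - i.+1).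
  have {1}-> : m = i.-1 + (2 + (m - i.+1)) by lia.
  by rewrite !iotaD (_ : 1 + i.-1 = i) ?addn2 //; lia.
have pair : hook_prod n (iota i 2) = word (hook i n ++ hook i.+1 n).
  by rewrite word_cat /hook_prod /= mulg1.
by rewrite !hook_prod_cat pair mulgA.
Qed.

Lemma gconj_zpow_hook_prod n j e s :
  (forall k, k \in s -> all is_gen (hook k n) /\ gconj (t j) (word (hook k n)) = z ** t j) ->
  gconj (zpow e ** t j) (hook_prod n s) = zpow (e + size s) ** t j.
Proof.
elim: s e => [|k s IH] e hs /=; first by rewrite addn0 gconjg1.
have [gk conj_k] := hs k (mem_head k s).
rewrite gconjM gconj_zpowl // conj_k mulgA -[z]/(zpow 1) zpowD addn1 IH ?addSnnS //.
by move=> k' k'_s; apply: hs; rewrite inE k'_s orbT.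
Qed.

Lemma gconj_hook_prod n j s :
  (forall k, k \in s -> all is_gen (hook k n) /\ gconj (t j) (word (hook k n)) = z ** t j) ->
  gconj (t j) (hook_prod n s) = zpow (size s) ** t j.
Proof. by move=> hs; rewrite -(gconj_zpow_hook_prod 0 hs) mul1g. Qed.

Lemma gconj_tau_low m i : m + m <= N.+1 -> 0 < i < m ->
  gconj (t i) (hook_prod m.-1 (iota 1 m)) = zpow m ** t (i + m).
Proof.
move=> mm_le i_in; rewrite (hook_prod_split _ i_in) !gconjM.
rewrite gconj_hook_prod; last first.
  move=> k; rewrite mem_iota => k_in.
  by split; [apply: all_gen_hook | apply: gconj_hook_inner]; lia.
rewrite gconj_zpowl; last by rewrite all_cat !all_gen_hook //; lia.
rewrite gconj_hook_pair_low; [| lia | lia | lia].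
rewrite (_ : (i + m.-1).+1 = i + m); last by lia.
rewrite gconj_zpow_hook_prod; last first.
  move=> k; rewrite mem_iota => k_in.
  by split; [apply: all_gen_hook | apply: gconj_hook_inner]; lia.
by rewrite !size_iota (@zpow_mod2 _ m) //; lia.
Qed.

Lemma gconj_tau_high m i : m + m <= N.+1 -> 0 < i < m ->
  gconj (t (i + m)) (hook_prod m.-1 (iota 1 m)) = zpow m ** t i.
Proof.
move=> mm_le i_in; rewrite (hook_prod_split _ i_in) !gconjM.
have gim : is_gen (i + m) by rewrite /is_gen; lia.
have gi : is_gen i by rewrite /is_gen; lia.
rewrite gconj_hook_prod; last first.
  move=> k; rewrite mem_iota => k_in.
  by split; [apply: all_gen_hook | apply: gconj_hook_far]; lia.
rewrite gconj_zpowl; last by rewrite all_cat !all_gen_hook //; lia.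
rewrite (_ : i + m = (i + m.-1).+1); last by lia.
rewrite gconj_hook_pair_high; [| lia | lia].
rewrite gconj_zpow_hook_prod; last first.
  move=> k; rewrite mem_iota => k_in.
  by split; [apply: all_gen_hook | apply: gconj_hook_far]; lia.
by rewrite !size_iota (@zpow_mod2 _ m) //; lia.
Qed.

End Relations.
End Conjugation.

Theorem lemma4p5 (G : Type) (mul : G -> G -> G) (one : G) (inv : G -> G)
  (HG : is_group mul one inv) (m : nat) (hm : 2 <= m) (z : G) (t : nat -> G)
  (Hrel : stilde_rels mul one m z t) :
  forall i, 1 <= i <= m - 1 ->
    mul (mul (inv (tau mul one m t)) (t i)) (tau mul one m t)
      = mul (gpow mul one m z) (t (i + m))
    /\ mul (mul (inv (tau mul one m t)) (t (i + m))) (tau mul one m t)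
      = mul (gpow mul one m z) (t i).
Proof.
case: HG => mulgA mul1g mulg1 mulVg mulgV.
case: Hrel => sqr_z sqr_t cube_t far_t.
have braid_t i : is_gen (2 * m - 1) i -> is_gen (2 * m - 1) i.+1 ->
    mul (mul (t i) (t i.+1)) (t i) = mul (mul (t i.+1) (t i)) (t i.+1).
  move=> gi gi1; apply: (braid_of_cube mulgA mul1g mulg1 mulgV sqr_z).
  - exact: sqr_t.
  - exact: sqr_t.
  - by apply: cube_t; move: gi gi1; rewrite /is_gen; lia.
move=> i i_in; have mm_le : m + m <= (2 * m - 1).+1 by lia.
have {}i_in : 0 < i < m by lia.
rewrite gpow_zpow //; split.
- exact: (gconj_tau_low mulgA mul1g mulg1 mulVg mulgV sqr_z sqr_t braid_t far_t).
- exact: (gconj_tau_high mulgA mul1g mulg1 mulVg mulgV sqr_z sqr_t braid_t far_t).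
Qed.
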